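(* Under the hypotheses of the conformal-measure theorem described in the context, assume additionally that $\phi$ satisfies (H1). Then for a.e. $\omega$, every $n\ge1$, every $w=(w_0,\dots,w_{n-1})\in\mathcal W^n_\omega$ and every $x\in[w]_\omega$, $$\frac{\mu_{\theta^n\omega}(T_{\theta^{n-1}\omega}[w_{n-1}]_{\theta^{n-1}\omega})}{B_{\theta^n\omega}}\le\Lambda_n(\omega)\frac{\mu_\omega([w]_\omega)}{e^{\phi^\omega_n(x)-nP_G(\phi)}}\le B_{\theta^n\omega}\,\mu_{\theta^n\omega}(T_{\theta^{n-1}\omega}[w_{n-1}]_{\theta^{n-1}\omega}).$$ If moreover $(X,T)$ has the big image property, then $D_\omega:=\inf\{\mu_\omega(T_{\theta^{-1}\omega}[b]_{\theta^{-1}\omega}): b\in\mathcal W^1_{\theta^{-1}\omega}\}>0$ for a.e. $\omega\in\Omega_{bi}$, and hence for a.e. $\omega$, all $n$ with $\theta^n\omega\in\Omega_{bi}$, all $w\in\mathcal W^n_\omega$ and $x\in[w]_\omega$, $$B_{\theta^n\omega}^{-1}D_{\theta^n\omega}\le\Lambda_n(\omega)\frac{\mu_\omega([w]_\omega)}{e^{\phi^\omega_n(x)-nP_G(\phi)}}\le B_{\theta^n\omega}.$$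
   Context: Let $(\Omega,\mathcal F,P)$ be a probability space and $\theta:\Omega\to\Omega$ an invertible, bimeasurable, $P$-preserving, ergodic map. Let $\ell:\Omega\to\mathbb N\cup\{\infty\}$ be measurable with $\ell_\omega>1$, and for a.e. $\omega$ let $A_\omega=(\alpha_{ij}(\omega))_{0\le i<\ell_\omega,\,0\le j<\ell_{\theta\omega}}$ be a $\{0,1\}$-matrix depending measurably on $\omega$ such that every row contains an entry $1$. Put $X_\omega=\{x=(x_0,x_1,\dots): x_i<\ell_{\theta^i\omega},\ \alpha_{x_ix_{i+1}}(\theta^i\omega)=1\ \forall i\ge0\}$, $T_\omega:X_\omega\to X_{\theta\omega}$ the left shift, $X=\{(\omega,x):x\in X_\omega\}$, $T^n_\omega=T_{\theta^{n-1}\omega}\circ\cdots\circ T_\omega$. A word $w=(w_0,\dots,w_{n-1})$ is $\omega$-admissible if $w_i<\ell_{\theta^i\omega}$ for all $i<n$ and $\alpha_{w_iw_{i+1}}(\theta^i\omega)=1$ for $i<n-1$; $\mathcal W^n_\omega$ is the set of such words; $[w]_\omega=\{x\in X_\omega: x_i=w_i,\ i<n\}$; $\Omega_w=\{\omega: w\in\mathcal W^n_\omega\}$; $\mathcal W^n$ the words with $P(\Omega_w)>0$. Topologically mixing: for all $a,b\in\mathcal W^1$ there is an $\mathbb N$-valued random variable $N_{ab}$ with $[a]_\omega\cap(T^n_\omega)^{-1}[b]_{\theta^n\omega}\ne\emptyset$ whenever $\omega\in\Omega_a$, $n\ge N_{ab}(\omega)$, $\theta^n\omega\in\Omega_b$.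 Big image property: there exist measurable $\Omega_{bi}$ with $P(\Omega_{bi})>0$ and finite sets $\mathcal I^\omega_{bi}\subset\mathcal W^1_\omega$ ($\omega\in\Omega_{bi}$) such that for every $c\in\mathcal W^1_{\theta^{-1}\omega}$ there is $b\in\mathcal I^\omega_{bi}$ with $\alpha_{cb}(\theta^{-1}\omega)=1$. A potential is a measurable $\phi:X\to\mathbb R$; $\phi^\omega_n(x)=\sum_{k=0}^{n-1}\phi^{\theta^k\omega}(T^k_\omega x)$; $V^\omega_n(\phi)=\sup\{|\phi^\omega(x)-\phi^\omega(y)|: x_i=y_i\ (i<n)\}$. $\phi$ is $k$-Hölder if there are $r\in(0,1)$ and a random variable $\kappa\ge1$ with $\int\log\kappa\,dP<\infty$ and $V^\omega_j(\phi)\le\kappa(\omega)r^j$ for all $j\ge k$; $B_\omega:=\exp\sum_{j\ge1}\kappa(\theta^{-j}\omega)r^j$. (H1)/(H2): $\phi$ is 1-Hölder/2-Hölder and $\int\log B\,dP<\infty$. Ruelle operator $L^\omega_\phi f(x)=\sum_{y\in X_\omega,T_\omega y=x}e^{\phi^\omega(y)}f(y)$; (S1): $\int\log\sup L^\omega_\phi1\,dP<\infty$; (S2): $\int\log\inf L^\omega_\phi1\,dP>-\infty$. Setting of the conformal-measure theorem: $(X,T)$ topologically mixing, $\phi$ satisfies (H2),(S1),(S2), the relative Gurevič pressure $P_G(\phi)$ is finite, and $(X,T,\phi)$ is of divergence type, i.e. for a fixed $a\in\mathcal W^1$, a measurable family $\xi_\omega\in X_\omega$ with $\xi_\omega\in[a]_\omega$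 on $\Omega_a$ and some $\widetilde\Omega\subset\Omega_a$ of positive measure, $P_\omega(s)=\sum_{n:\theta^n\omega\in\widetilde\Omega}s^nL^{\omega,n}_\phi1(\xi_{\theta^n\omega})$ is finite for $s<e^{-P_G(\phi)}$ and infinite at $s=e^{-P_G(\phi)}$. Then there are $s_n\nearrow e^{-P_G(\phi)}$, $\lambda(\omega)=\lim_nP_\omega(s_n)/P_{\theta\omega}(s_n)\in(0,\infty)$ a.s., and Borel probability measures $\mu_\omega$ on $X_\omega$, positive on cylinders, with $\mu_{\theta\omega}(T_\omega E)=\lambda(\omega)\int_Ee^{P_G(\phi)-\phi^\omega}d\mu_\omega$ for all Borel $E\subset[c]_\omega$, $c\in\mathcal W^1_\omega$. $\lambda$ and $\mu_\omega$ denote these objects; $\Lambda_n(\omega)=\lambda(\omega)\lambda(\theta\omega)\cdots\lambda(\theta^{n-1}\omega)$. *)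

From HB Require Import structures.
From mathcomp Require Import all_boot all_order all_algebra.
From mathcomp Require Import all_classical all_reals all_analysis.
Set Implicit Arguments.
Unset Strict Implicit.
Unset Printing Implicit Defensive.
Import Order.TTheory GRing.Theory Num.Theory.
Import numFieldNormedType.Exports.
Local Open Scope classical_set_scope.
Local Open Scope ring_scope.

(* Borel sigma-algebra of the product topology on N^N (N discrete) =
   sigma-algebra generated by the cylinder sets. *)
Definition seq_cylinders : set (set (nat -> nat)) :=
  [set A | exists (n : nat) (w : nat -> nat),
      A = [set x | forall i, (i < n)%N -> x i = w i]].
Definition Seq := g_sigma_algebraType seq_cylinders.

(* i < l, where l : option nat encodes N \cup {oo} (None = oo) *)
Definition lt_ell (l : option nat) (i : nat) : Prop :=
  if l is Some k then (i < k)%N else True.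

Definition shiftn (n : nat) (x : Seq) : Seq := fun i => x (n + i)%N.

Section RandomShift.
Context (R : realType) (d : measure_display) (Omega : measurableType d)
  (P : probability Omega R) (theta thetai : Omega -> Omega)
  (ell : Omega -> option nat) (alpha : Omega -> nat -> nat -> bool).

Definition Xw (om : Omega) : set Seq :=
  [set x | forall i, lt_ell (ell (iter i theta om)) (x i) /\
                     alpha (iter i theta om) (x i) (x i.+1)].

Definition Xset : set (Omega * Seq) := [set p | Xw p.1 p.2].

Definition admissible (om : Omega) (w : seq nat) : Prop :=
  (forall i, (i < size w)%N -> lt_ell (ell (iter i theta om)) (nth 0%N w i)) /\
  (forall i, (i.+1 < size w)%N ->
     alpha (iter i theta om) (nth 0%N w i) (nth 0%N w i.+1)).

Definition Wn (n : nat) (om : Omega) : set (seq nat) :=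
  [set w | size w = n /\ admissible om w].

Definition cyl (om : Omega) (w : seq nat) : set Seq :=
  [set x | Xw om x /\ forall i, (i < size w)%N -> x i = nth 0%N w i].

Definition Omega_w (w : seq nat) : set Omega := [set om | admissible om w].

Definition Wglob (n : nat) : set (seq nat) :=
  [set w | size w = n /\ (0 < P (Omega_w w))%E].

Definition base_system : Prop :=
  cancel theta thetai /\ cancel thetai theta /\
  measurable_fun setT theta /\ measurable_fun setT thetai /\
  (forall A, measurable A -> P (theta @^-1` A) = P A) /\
  (forall A, measurable A -> theta @^-1` A = A -> P A = 0%E \/ P A = 1%E) /\
  (forall k, measurable [set om | ell om = k]) /\
  (forall om, lt_ell (ell om) 1%N) /\
  (forall i j, measurable [set om | alpha om i j]) /\
  {ae P, forall om, forall i, lt_ell (ell om) i ->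
        exists j, lt_ell (ell (theta om)) j /\ alpha om i j}.

Definition top_mixing : Prop :=
  forall a b, Wglob 1 [:: a] -> Wglob 1 [:: b] ->
  exists N : Omega -> nat,
    (forall k, measurable [set om | N om = k]) /\
    forall om n, Omega_w [:: a] om -> (N om <= n)%N ->
      Omega_w [:: b] (iter n theta om) ->
      exists x, cyl om [:: a] x /\ cyl (iter n theta om) [:: b] (shiftn n x).

Definition big_image_property (Obi : set Omega) (I : Omega -> seq nat) : Prop :=
  measurable Obi /\ (0 < P Obi)%E /\
  forall om, Obi om ->
    (forall b, b \in I om -> Wn 1 om [:: b]) /\
    (forall c, Wn 1 (thetai om) [:: c] ->
       exists2 b, b \in I om & alpha (thetai om) c b).

Section Potential.
Variable phi : Omega -> Seq -> R.

Definition measurable_potential : Prop :=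
  measurable_fun Xset (fun p => phi p.1 p.2).

Definition birk (om : Omega) (n : nat) (x : Seq) : R :=
  \sum_(k < n) phi (iter k theta om) (shiftn k x).

Definition Var (om : Omega) (n : nat) : \bar R :=
  ereal_sup [set e | exists x y, Xw om x /\ Xw om y /\
      (forall i, (i < n)%N -> x i = y i) /\ e = (`|phi om x - phi om y|)%:E].

Definition holder (k : nat) (r : R) (kappa : Omega -> R) : Prop :=
  0 < r < 1 /\ measurable_fun setT kappa /\ (forall om, 1 <= kappa om) /\
  (\int[P]_om (ln (kappa om))%:E < +oo)%E /\
  forall om j, (k <= j)%N -> (Var om j <= (kappa om * r ^+ j)%:E)%E.

Definition logB (kappa : Omega -> R) (r : R) (om : Omega) : \bar R :=
  (\sum_(1 <= j <oo) (kappa (iter j thetai om) * r ^+ j)%:E)%E.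

(* B_omega (real-valued; finite a.e.) *)
Definition Bf (kappa : Omega -> R) (r : R) (om : Omega) : R :=
  expR (fine (logB kappa r om)).

(* (H1) / (H2) : (Hcond 1) / (Hcond 2) *)
Definition Hcond (k : nat) : Prop :=
  exists r kappa, holder k r kappa /\ (\int[P]_om logB kappa r om < +oo)%E.

(* L^{omega,n}_phi 1 (x) = sum_{y in X_omega, T^n_omega y = x} e^{phi^omega_n(y)} *)
Definition Lsum (om : Omega) (n : nat) (x : Seq) : \bar R :=
  (\esum_(y in [set y | Xw om y /\ shiftn n y = x]) (expR (birk om n y))%:E)%E.

Definition S1 : Prop :=
  (\int[P]_om maxe (lne (ereal_sup [set Lsum om 1 x | x in Xw (theta om)])) 0
     < +oo)%E.
Definition S2 : Prop :=
  (\int[P]_om maxe (- lne (ereal_inf [set Lsum om 1 x | x in Xw (theta om)])) 0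
     < +oo)%E.

Definition Pser (xi : Omega -> Seq) (Ot : set Omega) (om : Omega) (s : R)
  : \bar R :=
  (\sum_(0 <= n <oo)
     (if `[< Ot (iter n theta om) >] then
        (s ^+ n)%:E * Lsum om n (xi (iter n theta om)) else 0))%E.

(* divergence type, with the data a, xi, Ot and the value PG of P_G(phi) *)
Definition divergence_type (PG : R) (a : nat) (xi : Omega -> Seq)
  (Ot : set Omega) : Prop :=
  Wglob 1 [:: a] /\ measurable_fun setT xi /\
  {ae P, forall om, Xw om (xi om)} /\
  (forall om, Omega_w [:: a] om -> cyl om [:: a] (xi om)) /\
  measurable Ot /\ Ot `<=` Omega_w [:: a] /\ (0 < P Ot)%E /\
  {ae P, forall om,
     (forall s, 0 <= s < expR (- PG) -> (Pser xi Ot om s < +oo)%E) /\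
     Pser xi Ot om (expR (- PG)) = +oo%E}.

(* the objects provided by the conformal-measure theorem *)
Definition conformal_data (PG : R) (xi : Omega -> Seq) (Ot : set Omega)
  (s : nat -> R) (lam : Omega -> R) (mu : Omega -> probability Seq R) : Prop :=
  (forall n, 0 <= s n < expR (- PG)) /\ {homo s : m n / (m <= n)%N >-> m <= n} /\
  (s @ \oo --> expR (- PG)) /\
  {ae P, forall om, 0 < lam om /\
     ((fun n => fine (Pser xi Ot om (s n)) / fine (Pser xi Ot (theta om) (s n)))
        @ \oo --> lam om)} /\
  {ae P, forall om,
     mu om (Xw om) = 1%E /\
     (forall w, (0 < size w)%N -> admissible om w -> (0 < mu om (cyl om w))%E) /\
     (forall c (E : set Seq), Wn 1 om [:: c] -> measurable E ->
        E `<=` cyl om [:: c] ->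
        mu (theta om) (shiftn 1 @` E) =
          ((lam om)%:E * \int[mu om]_(x in E) (expR (PG - phi om x))%:E)%E)}.

Definition Lam (lam : Omega -> R) (n : nat) (om : Omega) : R :=
  \prod_(k < n) lam (iter k theta om).

Definition middle (PG : R) (lam : Omega -> R) (mu : Omega -> probability Seq R)
  (om : Omega) (n : nat) (w : seq nat) (x : Seq) : R :=
  Lam lam n om * fine (mu om (cyl om w)) / expR (birk om n x - n%:R * PG).

End Potential.

Definition Timg (mu : Omega -> probability Seq R) (om : Omega) (n : nat)
  (w : seq nat) : R :=
  fine (mu (iter n theta om)
          (shiftn 1 @` cyl (iter n.-1 theta om) [:: nth 0%N w n.-1])).

Definition Dinf (mu : Omega -> probability Seq R) (om : Omega) : \bar R :=
  ereal_inf [set mu om (shiftn 1 @` cyl (thetai om) [:: b]) |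
             b in [set b | Wn 1 (thetai om) [:: b]]].

End RandomShift.

From HB Require Import structures.
From mathcomp Require Import all_boot all_order all_algebra.
From mathcomp Require Import all_classical all_reals all_analysis.
From mathcomp Require Import ring lra measurable_realfun.
Import Order.TTheory GRing.Theory Num.Theory.
Import numFieldNormedType.Exports.
Local Open Scope classical_set_scope.
Local Open Scope ring_scope.

(* On a cylinder [c w] over om the potential phi om oscillates
   by at most kappa(om) r^{|w|+1}, so conformality,
     mu_{theta om}(T [c w]) = lam om \int_{[c w]} e^{P_G - phi om} dmu_om,
   shows that Lambda_n(om) mu_om([w]) e^{-(phi_n^om(x) - n P_G)} changes by a
   factor in [e^{-kappa(om) r^n}, e^{kappa(om) r^n}] when the first letter of
   the word is dropped and om is replaced by theta om.  Dropping the letters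
   one at a time compares it with mu_{theta^n om}(T [w_{n-1}]) up to the factor
   exp (sum_{j=1}^n kappa(theta^{-j} theta^n om) r^j) <= B_{theta^n om}; as
   theta preserves P, the needed properties hold along the orbit of a.e. om.
   Under the big image property every T [c] contains T [c b] = [b] for some b
   in the finite set I_om, so D_om is at least min_{b in I_om} mu_om([b]) > 0. *)

Lemma measurable_prefix (n : nat) (w : nat -> nat) :
  measurable [set x : Seq | forall i, (i < n)%N -> x i = w i].
Proof. by apply: sub_sigma_algebra; exists n, w. Qed.

(* Countably many prefixes of length n, enumerated through [unpickle]. *)
Lemma measurable_mkseq (n : nat) (Q : seq nat -> Prop) :
  measurable [set x : Seq | Q (mkseq x n)].
Proof.
pose F k : set Seq := if unpickle k is Some u then
  if (size u == n) && `[< Q u >] then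
    [set x : Seq | forall i, (i < n)%N -> x i = nth 0%N u i] else set0
  else set0.
have -> : [set x : Seq | Q (mkseq x n)] = \bigcup_k F k.
  apply/seteqP; split => x /= Qx.
    exists (pickle (mkseq x n)) => //.
    rewrite /F pickleK size_mkseq eqxx asboolT //= => i ltin.
    by rewrite nth_mkseq.
  case: Qx => k _; rewrite /F; case: (unpickle k) => // u.
  case: ifP => // /andP[/eqP <- /asboolP Qu] xu.
  suff -> : mkseq x (size u) = u by [].
  apply: (@eq_from_nth _ 0%N); rewrite size_mkseq // => i ltiu.
  by rewrite nth_mkseq // xu.
apply: bigcupT_measurable => k; rewrite /F; case: (unpickle k) => // u.
by case: ifP => // _; apply: measurable_prefix.
Qed.

Lemma measurable_coord2 (i : nat) (Q : nat -> nat -> Prop) :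
  measurable [set x : Seq | Q (x i) (x i.+1)].
Proof.
have := measurable_mkseq i.+2 (fun u => Q (nth 0%N u i) (nth 0%N u i.+1)).
by rewrite (eq_set (fun x => congr2 Q (nth_mkseq _ _ _) (nth_mkseq _ _ _))).
Qed.

Lemma measurable_coord (i : nat) (Q : nat -> Prop) :
  measurable [set x : Seq | Q (x i)].
Proof. exact: (measurable_coord2 i (fun a _ => Q a)). Qed.

Definition scons (c : nat) (y : Seq) : Seq :=
  fun i => if i is j.+1 then y j else c.

Lemma shiftn1_scons c y : shiftn 1 (scons c y) = y.
Proof. by apply/funext => i; rewrite /shiftn add1n. Qed.

Lemma shiftn0 (x : Seq) : shiftn 0 x = x.
Proof. by apply/funext => i; rewrite /shiftn add0n. Qed.

Lemma shiftnS (n : nat) (x : Seq) : shiftn n.+1 x = shiftn n (shiftn 1 x).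
Proof. by apply/funext => i; rewrite /shiftn add1n addSn. Qed.

Section Cylinders.
Context {d : measure_display} {Omega : measurableType d}
  {theta : Omega -> Omega} {ell : Omega -> option nat}
  {alpha : Omega -> nat -> nat -> bool}.

Local Notation Xw := (Xw theta ell alpha).
Local Notation cyl := (cyl theta ell alpha).
Local Notation Wn := (Wn theta ell alpha).
Local Notation admissible := (admissible theta ell alpha).

Lemma measurable_Xw om : measurable (Xw om).
Proof.
have -> : Xw om = \bigcap_i [set x : Seq |
    lt_ell (ell (iter i theta om)) (x i) /\
    alpha (iter i theta om) (x i) (x i.+1)].
  by apply/seteqP; split => x /= Xx i; [move=> _|]; apply: Xx.
by apply: bigcapT_measurable => i; apply: (measurable_coord2 i (fun a b =>
  lt_ell (ell (iter i theta om)) a /\ alpha (iter i theta om) a b)).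
Qed.

Lemma measurable_cyl om w : measurable (cyl om w).
Proof. exact: measurableI (measurable_Xw om) (measurable_prefix _ _). Qed.

Lemma Xw_cons om x : Xw om x <->
  [/\ lt_ell (ell om) (x 0%N), alpha om (x 0%N) (x 1%N)
    & Xw (theta om) (shiftn 1 x)].
Proof.
split=> [Xx|[lx ax Xx] [|i] //].
  have [lx ax] := Xx 0%N; split => // i.
  by have := Xx i.+1; rewrite /shiftn !add1n iterSr.
by have := Xx i; rewrite /shiftn !add1n iterSr.
Qed.

Lemma cyl_head {om c w x} : cyl om (c :: w) x -> cyl om [:: c] x.
Proof. by move=> [Xx cx]; split => // -[|i] // _; apply: (cx 0%N). Qed.

Lemma Wn_head {n om c w} : Wn n.+1 om (c :: w) -> Wn 1 om [:: c].
Proof.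
by move=> [_ [adm _]]; split => //; split => -[|i] //= _; apply: (adm 0%N).
Qed.

Lemma Wn_nth {n om w} i : (i < n)%N -> Wn n om w ->
  Wn 1 (iter i theta om) [:: nth 0%N w i].
Proof.
move=> ltin [sw [adm _]]; split => //; split => -[|j] //= _.
by apply: adm; rewrite sw.
Qed.

Lemma Wn_behead {n om c w} : Wn n.+1 om (c :: w) -> Wn n (theta om) w.
Proof.
move=> [[sw] [adm1 adm2]]; split => //; split => i lti.
  by have := adm1 i.+1 lti; rewrite iterSr.
by have := adm2 i.+1 lti; rewrite iterSr.
Qed.

Lemma shiftn1_cyl_cons {om c w} : w != [::] -> admissible om (c :: w) ->
  shiftn 1 @` cyl om (c :: w) = cyl (theta om) w.
Proof.
move=> w0 [adm1 adm2]; apply/seteqP; split => y /=.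
  move=> [x [/Xw_cons [_ _ Xx] cx] <-]; split => // i ltiw.
  by rewrite /shiftn add1n (cx i.+1).
move=> [Xy cy]; exists (scons c y); last exact: shiftn1_scons.
split; last by move=> [|i] //= ltiw; rewrite cy.
apply/Xw_cons; rewrite shiftn1_scons; split => //; first exact: (adm1 0%N).
by case: w w0 cy {adm1} adm2 => // b w _ cy /(_ 0%N erefl) /=; rewrite (cy 0%N).
Qed.

Lemma shiftn1_cyl1 om c : shiftn 1 @` cyl om [:: c] =
  Xw (theta om) `&` [set y : Seq | alpha om c (y 0%N) /\ lt_ell (ell om) c].
Proof.
apply/seteqP; split => y /=.
  move=> [x [/Xw_cons [lx ax Xx] /(_ 0%N erefl) /= x0] <-].
  by rewrite /shiftn addn0 -x0.
move=> [Xy [ay lc]]; exists (scons c y); last exact: shiftn1_scons.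
by split=> [|[|i] //]; apply/Xw_cons; rewrite shiftn1_scons.
Qed.

Lemma measurable_shiftn1_cyl1 om c : measurable (shiftn 1 @` cyl om [:: c]).
Proof.
rewrite shiftn1_cyl1; apply: measurableI (measurable_Xw _) _.
exact: (measurable_coord 0 (fun a => alpha om c a /\ lt_ell (ell om) c)).
Qed.

End Cylinders.

Section NonnegIntegral.
Context {R : realType} {d : measure_display} {T : measurableType d}
  (mu : {measure set T -> \bar R}).
Local Open Scope ereal_scope.

(* The integral of a nonnegative function is a supremum over the simple
   functions below it, so no measurability is needed for monotonicity. *)
Lemma ge0_le_integral_nonmeas (D : set T) (f g : T -> \bar R) :
  (forall x, D x -> 0 <= f x) -> (forall x, D x -> 0 <= g x) ->
  (forall x, D x -> f x <= g x) ->
  \int[mu]_(x in D) f x <= \int[mu]_(x in D) g x.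
Proof.
move=> f0 g0 fg; rewrite !ge0_integralE //.
apply: ereal_sup_le => _ [h hf <-]; exists h => //= x.
apply: le_trans (hf x) _; rewrite /patch.
by case: ifPn => // /set_mem; apply: fg.
Qed.

Lemma integral_between (E : set T) (f : T -> R) (lo hi : R) :
  measurable E -> mu E \is a fin_num -> (0 <= lo)%R ->
  (forall y, E y -> lo <= f y <= hi)%R ->
  \int[mu]_(x in E) (f x)%:E \is a fin_num /\
  (lo * fine (mu E) <= fine (\int[mu]_(x in E) (f x)%:E) <= hi * fine (mu E))%R.
Proof.
move=> mE muE lo0 loh.
have : lo%:E * mu E <= \int[mu]_(x in E) (f x)%:E <= hi%:E * mu E.
  rewrite -!integral_cst //; apply/andP.
  split; apply: ge0_le_integral_nonmeas => y Ey /=;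
    have /andP[loy yhi] := loh y Ey; have fy0 := le_trans lo0 loy;
    by rewrite lee_fin // (le_trans fy0 yhi).
rewrite -(fineK muE) -!EFinM => /andP[loI Ihi].
have Ifin : \int[mu]_(x in E) (f x)%:E \is a fin_num.
  by rewrite fin_numElt (lt_le_trans _ loI) ?(le_lt_trans Ihi) ?ltNyr ?ltry.
by split => //; apply/andP; split; rewrite -lee_fin (fineK Ifin).
Qed.

End NonnegIntegral.

Section WithinExp.
Context {R : realType}.
Implicit Types e a b c k : R.

Definition within_expR e a b := a * expR (- e) <= b <= a * expR e.

Lemma within_expR_sym {e a b} : within_expR e a b -> within_expR e b a.
Proof.
move=> /andP[lo hi]; apply/andP; split.
  by rewrite -(ler_pM2r (expR_gt0 e)) -mulrA -expRD addNr expR0 mulr1.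
by rewrite -(ler_pM2r (expR_gt0 (- e))) -mulrA -expRD subrr expR0 mulr1.
Qed.

Lemma within_expR_trans {e1 e2 a b c} :
  within_expR e1 a b -> within_expR e2 b c -> within_expR (e1 + e2) a c.
Proof.
move=> /andP[lo1 hi1] /andP[lo2 hi2]; apply/andP; split.
  rewrite opprD expRD mulrA; apply: le_trans lo2.
  by rewrite ler_pM2r ?expR_gt0.
rewrite expRD mulrA; apply: le_trans hi2 _.
by rewrite ler_pM2r ?expR_gt0.
Qed.

Lemma within_expR_mulr {e a b k} :
  0 <= k -> within_expR e a b -> within_expR e (a * k) (b * k).
Proof.
move=> k0 /andP[lo hi].
by rewrite /within_expR (mulrAC a k) (mulrAC a k) !ler_wpM2r.
Qed.

Lemma within_expR_le {e1 e2 a b} :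
  e1 <= e2 -> 0 <= a -> within_expR e1 a b -> within_expR e2 a b.
Proof.
move=> e12 a0 /andP[lo hi]; apply/andP; split.
  by apply: le_trans lo; rewrite ler_wpM2l // ler_expR lerN2.
by apply: le_trans hi _; rewrite ler_wpM2l // ler_expR.
Qed.

End WithinExp.

Lemma iter_can {T : Type} {f g : T -> T} (k : nat) :
  cancel f g -> cancel (iter k f) (iter k g).
Proof. by move=> fK; elim: k => // k IH x; rewrite iterSr iterS fK IH. Qed.

Lemma gt0_lower_bound_seq (R : realType) (T : eqType) (s : seq T)
    (f : T -> \bar R) : (forall b, b \in s -> 0 < f b)%E ->
  exists2 e : \bar R, (0 < e)%E & forall b, b \in s -> (e <= f b)%E.
Proof.
elim: s => [|b s IH] f0; first by exists +oo%E.
have [e e0 le_e] := IH (fun b' b's => f0 b' (@mem_behead _ (b :: s) b' b's)).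
exists (mine (f b) e); first by rewrite lt_min f0 ?mem_head.
move=> b'; rewrite in_cons => /orP[/eqP->|b's]; first by rewrite ge_min lexx.
by rewrite ge_min le_e ?orbT.
Qed.

Section MeasurePreserving.
Context {R : realType} {d : measure_display} {Omega : measurableType d}
  (P : probability Omega R).
Implicit Types (f g : Omega -> Omega) (Q : Omega -> Prop).

Definition measure_preserving (f : Omega -> Omega) : Prop :=
  measurable_fun setT f /\ forall A, measurable A -> P (f @^-1` A) = P A.

Lemma measurable_preimage f (A : set Omega) :
  measurable_fun setT f -> measurable A -> measurable (f @^-1` A).
Proof. by move=> mf mA; rewrite -[_ @^-1` _]setTI; apply: mf. Qed.

Lemma ae_measure_preserving {f Q} : measure_preserving f ->
  {ae P, forall om, Q om} -> {ae P, forall om, Q (f om)}.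
Proof.
move=> [mf Pf] [N [mN PN0 QN]]; exists (f @^-1` N); split.
- exact: measurable_preimage.
- by rewrite Pf.
- by move=> om /= nQ; apply: QN.
Qed.

Lemma measurable_iter {f} k :
  measurable_fun setT f -> measurable_fun setT (iter k f).
Proof.
move=> mf; elim: k => [|k mfk]; first exact: measurable_id.
by rewrite iterfS; apply: measurableT_comp.
Qed.

Lemma measure_preserving_iter {f} k :
  measure_preserving f -> measure_preserving (iter k f).
Proof.
move=> [mf Pf]; split; first exact: measurable_iter.
elim: k => // k Pfk A mA.
by rewrite iterfS comp_preimage Pfk ?Pf //; apply: measurable_preimage.
Qed.

Lemma ae_iter {f Q} : measure_preserving f ->
  {ae P, forall om, Q om} -> {ae P, forall om, forall k, Q (iter k f om)}.
Proof.
move=> pf Qae; apply: ae_foralln => k.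
exact: ae_measure_preserving (measure_preserving_iter k pf) Qae.
Qed.

Lemma logB_fin_num_ae (thetai : Omega -> Omega) (kappa : Omega -> R) (r : R) :
  measurable_fun setT thetai -> measurable_fun setT kappa ->
  (forall om, 0 <= kappa om) -> 0 <= r ->
  (\int[P]_om logB thetai kappa r om < +oo)%E ->
  {ae P, forall om, logB thetai kappa r om \is a fin_num}.
Proof.
move=> mti mk k0 r0 Bint.
have term_ge0 j om : (0 <= (kappa (iter j thetai om) * r ^+ j)%:E)%E.
  by rewrite lee_fin mulr_ge0 // exprn_ge0.
have mB : measurable_fun setT (fun om => logB thetai kappa r om : \bar R).
  rewrite (_ : logB _ _ _ = fun om => \sum_(j <oo | j \in [pred j | 1 <= j]%N)
      (kappa (iter j thetai om) * r ^+ j)%:E)%E; last first.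
    by apply/funext => om; rewrite /logB eseries_cond.
  apply: ge0_emeasurable_sum => [j om _ _|j _]; first exact: term_ge0.
  apply/measurable_EFinP/measurable_funM => //.
  exact: measurableT_comp mk (measurable_iter j mti).
have B_ge0 om : (0 <= logB thetai kappa r om)%E by apply: nneseries_ge0.
have Bintegrable : P.-integrable setT (logB thetai kappa r).
  apply/integrableP; split => //.
  by under eq_integral do rewrite gee0_abs //.
by apply: filterS (integrable_ae measurableT Bintegrable) => om; apply.
Qed.

End MeasurePreserving.

Section Distortion.
Context {R : realType} {d : measure_display} {Omega : measurableType d}
  (theta thetai : Omega -> Omega) (ell : Omega -> option nat)
  (alpha : Omega -> nat -> nat -> bool) (phi : Omega -> Seq -> R)
  (PG : R) (lam : Omega -> R) (mu : Omega -> probability Seq R)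
  (r : R) (kappa : Omega -> R).
Hypotheses (thetaK : cancel theta thetai) (r_ge0 : 0 <= r)
  (kappa_ge0 : forall om, 0 <= kappa om)
  (Var_le : forall om j, (1 <= j)%N ->
     (Var theta ell alpha phi om j <= (kappa om * r ^+ j)%:E)%E).

Local Notation cyl := (cyl theta ell alpha).
Local Notation Wn := (Wn theta ell alpha).
Local Notation Timg := (Timg theta ell alpha mu).
Local Notation middle := (middle theta ell alpha phi PG lam mu).

Definition conformal_at (om : Omega) : Prop :=
  forall c (E : set Seq), Wn 1 om [:: c] -> measurable E ->
    E `<=` cyl om [:: c] ->
    mu (theta om) (shiftn 1 @` E) =
      ((lam om)%:E * \int[mu om]_(x in E) (expR (PG - phi om x))%:E)%E.

Lemma conformal_within om c E x0 e : 0 <= lam om -> conformal_at om ->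
  Wn 1 om [:: c] -> measurable E -> E `<=` cyl om [:: c] ->
  (forall y, E y -> `|phi om y - phi om x0| <= e) ->
  within_expR e (lam om * fine (mu om E) * expR (PG - phi om x0))
    (fine (mu (theta om) (shiftn 1 @` E))).
Proof.
move=> lam0 conf Wc mE sE phiE.
have expR_between y : E y -> expR (PG - phi om x0 - e) <= expR (PG - phi om y)
    <= expR (PG - phi om x0 + e).
  by move=> Ey; move: (phiE y Ey); rewrite ler_norml ler_expR ler_expR; lra.
have [Ifin /andP[loI Ihi]] := integral_between (mu om) _ _ _ _ mE
  (fin_num_measure (mu om) _ mE) (ltW (expR_gt0 _)) expR_between.
rewrite (conf c E) // -(fineK Ifin) -EFinM /= /within_expR -!mulrA -!expRD.
by apply/andP; split; rewrite ler_wpM2l // mulrC.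
Qed.

Lemma phi_dist_cyl om w x y : (1 <= size w)%N -> cyl om w x -> cyl om w y ->
  `|phi om y - phi om x| <= kappa om * r ^+ size w.
Proof.
move=> w0 [Xx wx] [Xy wy]; rewrite -lee_fin; apply: le_trans (Var_le om _ w0).
apply: ereal_sup_ubound; exists y, x; do 3 split => //.
by move=> i ltiw; rewrite wx // wy.
Qed.

Definition logB_partial (z : Omega) (n : nat) : R :=
  \sum_(1 <= j < n.+1) kappa (iter j thetai z) * r ^+ j.

Lemma logB_partialS n om : logB_partial (iter n.+1 theta om) n.+1 =
  logB_partial (iter n theta (theta om)) n + kappa om * r ^+ n.+1.
Proof.
by rewrite /logB_partial big_nat_recr // (iter_can n.+1 thetaK) -iterSr.
Qed.

Lemma logB_partial_le_logB z n : logB thetai kappa r z \is a fin_num ->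
  logB_partial z n <= fine (logB thetai kappa r z).
Proof.
move=> Bfin; rewrite -lee_fin fineK // /logB_partial -sumEFin.
by apply: nneseries_lim_ge => j _ _; rewrite lee_fin mulr_ge0 ?exprn_ge0.
Qed.

Definition conformal_weight (n : nat) (z : Omega) (y : Seq) : R :=
  Lam theta lam n z * expR (- (birk theta phi z n y - n%:R * PG)).

Lemma conformal_weight0 z y : conformal_weight 0 z y = 1.
Proof.
by rewrite /conformal_weight /Lam /birk !big_ord0 mul0r subr0 oppr0 expR0 mulr1.
Qed.

Lemma conformal_weight_ge0 n z y : (forall k, 0 <= lam (iter k theta z)) ->
  0 <= conformal_weight n z y.
Proof. by move=> lam0; rewrite mulr_ge0 ?prodr_ge0 // ltW ?expR_gt0. Qed.

Lemma middleE n z w y :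
  middle z n w y = fine (mu z (cyl z w)) * conformal_weight n z y.
Proof. by rewrite /middle /conformal_weight expRN mulrCA mulrA. Qed.

Lemma LamS n om : Lam theta lam n.+1 om = lam om * Lam theta lam n (theta om).
Proof.
by rewrite /Lam big_ord_recl; congr (_ * _); apply: eq_bigr => i _; rewrite iterSr.
Qed.

Lemma birkS n om x : birk theta phi om n.+1 x =
  phi om x + birk theta phi (theta om) n (shiftn 1 x).
Proof.
rewrite /birk big_ord_recl /= shiftn0; congr (_ + _).
by apply: eq_bigr => i _; rewrite /bump add0n -iterS iterSr shiftnS.
Qed.

Lemma middle_cons n om w x : middle om n.+1 w x =
  lam om * fine (mu om (cyl om w)) * expR (PG - phi om x) *
  conformal_weight n (theta om) (shiftn 1 x).
Proof.
rewrite middleE /conformal_weight LamS birkS -natr1.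
set b := birk theta phi (theta om) n (shiftn 1 x).
have -> : - (phi om x + b - (n%:R + 1) * PG) = (PG - phi om x) - (b - n%:R * PG).
  by ring.
rewrite expRD; ring.
Qed.

Lemma middle_within_shift {n om c w x} :
  (forall k, 0 <= lam (iter k theta om)) -> conformal_at om ->
  Wn n.+1 om (c :: w) -> cyl om (c :: w) x ->
  within_expR (kappa om * r ^+ n.+1)
    (fine (mu (theta om) (shiftn 1 @` cyl om (c :: w))) *
       conformal_weight n (theta om) (shiftn 1 x))
    (middle om n.+1 (c :: w) x).
Proof.
move=> lam0 conf Ww wx; rewrite middle_cons.
apply: within_expR_mulr.
  by apply: conformal_weight_ge0 => k; rewrite -iterSr.
apply: within_expR_sym; apply: conformal_within (Wn_head Ww) _ _ _ => //.
- exact: lam0 0%N.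
- exact: measurable_cyl.
- by move=> y /cyl_head.
- by case: Ww => sw _ y wy; rewrite -sw; apply: phi_dist_cyl.
Qed.

Lemma TimgS n om c w : Timg om n.+2 (c :: w) = Timg (theta om) n.+1 w.
Proof. by rewrite /Timg -!iterSr. Qed.

Lemma middle_within_Timg {n om w x} :
  (forall k, 0 <= lam (iter k theta om) /\ conformal_at (iter k theta om)) ->
  Wn n.+1 om w -> cyl om w x ->
  within_expR (logB_partial (iter n.+1 theta om) n.+1)
    (Timg om n.+1 w) (middle om n.+1 w x).
Proof.
elim: n om w x => [|n IH] om [|c w] x good Ww wx; try by case: Ww.
- have [[w0] _] := Ww; case: w w0 Ww wx => // _ Ww wx.
  rewrite logB_partialS /logB_partial big_geq // add0r.
  have := middle_within_shift (fun k => (good k).1) (good 0%N).2 Ww wx.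
  by rewrite conformal_weight0 mulr1.
- have [[sw] adm] := Ww.
  have w0 : w != [::] by case: w sw {Ww wx adm}.
  have good' k : 0 <= lam (iter k theta (theta om)) /\
      conformal_at (iter k theta (theta om)) by rewrite -iterSr.
  have Tx : cyl (theta om) w (shiftn 1 x).
    by rewrite -(shiftn1_cyl_cons w0 adm); exists x.
  have := middle_within_shift (fun k => (good k).1) (good 0%N).2 Ww wx.
  rewrite shiftn1_cyl_cons // -middleE => step.
  rewrite logB_partialS TimgS.
  exact: within_expR_trans (IH _ _ _ good' (Wn_behead Ww) Tx) step.
Qed.

Lemma middle_bounds om :
  (forall k, 0 <= lam (iter k theta om) /\ conformal_at (iter k theta om)) ->
  (forall k, logB thetai kappa r (iter k theta om) \is a fin_num) ->
  forall n w x, (1 <= n)%N -> Wn n om w -> cyl om w x ->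
  Timg om n w / Bf thetai kappa r (iter n theta om) <= middle om n w x /\
  middle om n w x <= Bf thetai kappa r (iter n theta om) * Timg om n w.
Proof.
move=> good Bfin [//|n] w x _ Ww wx.
have := middle_within_Timg good Ww wx.
have Timg_ge0 : 0 <= Timg om n.+1 w by apply/fine_ge0/measure_ge0.
move/(within_expR_le (logB_partial_le_logB _ _ (Bfin _)) Timg_ge0).
by rewrite /within_expR /Bf -expRN [expR _ * _]mulrC => /andP[].
Qed.

End Distortion.

Section BigImage.
Context {R : realType} {d : measure_display} {Omega : measurableType d}
  (theta thetai : Omega -> Omega) (ell : Omega -> option nat)
  (alpha : Omega -> nat -> nat -> bool) (mu : Omega -> probability Seq R).

Local Notation cyl := (cyl theta ell alpha).
Local Notation Wn := (Wn theta ell alpha).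
Local Notation Timg := (Timg theta ell alpha mu).
Local Notation Dinf := (Dinf theta thetai ell alpha mu).

Lemma Dinf_ge0 z : (0 <= Dinf z)%E.
Proof. by apply: le_ereal_inf_tmp => _ [b _ <-]. Qed.

Lemma Dinf_le z b : Wn 1 (thetai z) [:: b] ->
  (Dinf z <= mu z (shiftn 1 @` cyl (thetai z) [:: b]))%E.
Proof. by move=> Wb; apply: ereal_inf_lbound; exists b. Qed.

Lemma Timg_le1 om n w : Timg om n w <= 1.
Proof.
rewrite -lee_fin fineK ?fin_num_measure ?probability_le1 //;
  exact: measurable_shiftn1_cyl1.
Qed.

Lemma Dinf_le_Timg n om w : cancel theta thetai -> Wn n.+1 om w ->
  fine (Dinf (iter n.+1 theta om)) <= Timg om n.+1 w.
Proof.
move=> thetaK Ww; have := Dinf_le (iter n.+1 theta om) (nth 0%N w n).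
rewrite iterS thetaK => /(_ (Wn_nth n (ltnSn n) Ww)) D_le.
have Tfin : mu (theta (iter n theta om))
    (shiftn 1 @` cyl (iter n theta om) [:: nth 0%N w n]) \is a fin_num.
  by rewrite fin_num_measure //; apply: measurable_shiftn1_cyl1.
apply: fine_le => //; rewrite ge0_fin_numE ?Dinf_ge0 //.
by apply: le_lt_trans D_le _; rewrite ltey_eq Tfin.
Qed.

Lemma Dinf_gt0 om (I : seq nat) : cancel thetai theta ->
  (forall b, b \in I -> Wn 1 om [:: b]) ->
  (forall c, Wn 1 (thetai om) [:: c] ->
     exists2 b, b \in I & alpha (thetai om) c b) ->
  (forall w, (0 < size w)%N -> admissible theta ell alpha om w ->
     (0 < mu om (cyl om w))%E) ->
  (0 < Dinf om)%E.
Proof.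
move=> thetaiK WI big_image cyl_gt0.
have [e e0 le_e] := @gt0_lower_bound_seq R _ I (fun b => mu om (cyl om [:: b]))
  (fun b bI => cyl_gt0 [:: b] erefl (WI b bI).2).
apply: lt_le_trans e0 _; apply: le_ereal_inf_tmp => _ [c Wc <-].
have [b bI cb] := big_image c Wc; apply: le_trans (le_e b bI) _.
have adm : admissible theta ell alpha (thetai om) [:: c; b].
  split=> [[|[|i]] //= _|[|i] //= _]; first exact: (Wc.2.1 0%N).
  by rewrite thetaiK; apply: ((WI b bI).2.1 0%N).
rewrite -[X in cyl X](thetaiK om) -(shiftn1_cyl_cons _ adm) //.
apply: le_measure; rewrite ?inE; last by apply: image_subset => x /cyl_head.
- by rewrite shiftn1_cyl_cons //; apply: measurable_cyl.
- exact: measurable_shiftn1_cyl1.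
Qed.

End BigImage.

Theorem mainTheorem11 (R : realType) (d : measure_display)
  (Omega : measurableType d) (P : probability Omega R)
  (theta thetai : Omega -> Omega) (ell : Omega -> option nat)
  (alpha : Omega -> nat -> nat -> bool) (phi : Omega -> Seq -> R)
  (PG : R) (a : nat) (xi : Omega -> Seq) (Ot : set Omega)
  (s : nat -> R) (lam : Omega -> R) (mu : Omega -> probability Seq R)
  (r : R) (kappa : Omega -> R) :
  (* setting of the conformal-measure theorem *)
  base_system P theta thetai ell alpha ->
  top_mixing P theta ell alpha ->
  measurable_potential theta ell alpha phi ->
  Hcond P theta thetai ell alpha phi 2 ->
  S1 P theta ell alpha phi ->
  S2 P theta ell alpha phi ->
  divergence_type P theta ell alpha phi PG a xi Ot ->
  (* lam, mu : the objects given by the conformal-measure theorem *)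
  conformal_data P theta ell alpha phi PG xi Ot s lam mu ->
  (* (H1), with Hoelder data (r, kappa) defining B *)
  holder P theta ell alpha phi 1 r kappa ->
  (\int[P]_om logB thetai kappa r om < +oo)%E ->
  {ae P, forall om, forall (n : nat) (w : seq nat) (x : Seq),
     (1 <= n)%N -> Wn theta ell alpha n om w -> cyl theta ell alpha om w x ->
     Timg theta ell alpha mu om n w / Bf thetai kappa r (iter n theta om)
       <= middle theta ell alpha phi PG lam mu om n w x /\
     middle theta ell alpha phi PG lam mu om n w x
       <= Bf thetai kappa r (iter n theta om) * Timg theta ell alpha mu om n w}
  /\
  (forall (Obi : set Omega) (I : Omega -> seq nat),
     big_image_property P theta thetai ell alpha Obi I ->
     {ae P, forall om, (Obi om -> (0 < Dinf theta thetai ell alpha mu om)%E)} /\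
     {ae P, forall om, forall (n : nat) (w : seq nat) (x : Seq),
        (1 <= n)%N -> Obi (iter n theta om) ->
        Wn theta ell alpha n om w -> cyl theta ell alpha om w x ->
        (Bf thetai kappa r (iter n theta om))^-1 *
            fine (Dinf theta thetai ell alpha mu (iter n theta om))
          <= middle theta ell alpha phi PG lam mu om n w x /\
        middle theta ell alpha phi PG lam mu om n w x
          <= Bf thetai kappa r (iter n theta om)}).
Proof.
move=> [thetaK [thetaiK [mtheta [mthetai [Ptheta _]]]]] _ _ _ _ _ _
  [_ [_ [_ [lam_ae mu_ae]]]] [/andP[r_gt0 _] [mkappa [kappa_ge1 [_ Var_le]]]]
  Bint.
have kappa_ge0 om : 0 <= kappa om := le_trans ler01 (kappa_ge1 om).
have Bfin_ae := logB_fin_num_ae P _ _ _ mthetai mkappa kappa_ge0 (ltW r_gt0) Bint.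
pose good om := (0 <= lam om /\ conformal_at theta ell alpha phi PG lam mu om) /\
  logB thetai kappa r om \is a fin_num.
have orbit_ae : {ae P, forall om, forall k, good (iter k theta om)}.
  apply: (@ae_iter _ _ _ P theta good (conj mtheta Ptheta)).
  apply: filterS (filterI (filterI lam_ae mu_ae) Bfin_ae).
  by move=> om [[[lam0 _] [_ [_ conf]]] Bfin]; split; [split; [apply: ltW|]|].
have bounds om (orbit : forall k, good (iter k theta om)) :=
  @middle_bounds _ _ _ theta thetai ell alpha phi PG lam mu r kappa thetaK
    (ltW r_gt0) kappa_ge0 Var_le om (fun k => (orbit k).1) (fun k => (orbit k).2).
split; first by apply: filterS orbit_ae.
move=> Obi I [_ [_ big_image]]; split.
  apply: filterS mu_ae => om [_ [cyl_gt0 _]] /big_image[WI big].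
  exact: Dinf_gt0 thetaiK WI big cyl_gt0.
(* D <= mu(T [w_{n-1}]) <= 1 for every n; theta^n om in Obi only makes D > 0. *)
apply: filterS orbit_ae => om orbit [//|n] w x _ _ Ww wx.
have [lo hi] := bounds om orbit n.+1 w x erefl Ww wx.
have D_le := @Dinf_le_Timg _ _ _ theta thetai ell alpha mu n om w thetaK Ww.
have T_le1 := Timg_le1 theta ell alpha mu om n.+1 w.
have B_gt0 : 0 < Bf thetai kappa r (iter n.+1 theta om) by apply: expR_gt0.
split; first by apply: le_trans lo; rewrite mulrC ler_wpM2r // invr_ge0 ltW.
by apply: le_trans hi _; rewrite ler_piMr // ltW.
Qed.
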